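(* Let $1 \leq n < \omega$, let $H$ be a set of ordinals, and let $\langle u_b \mid b \in [H]^n \rangle$ be a uniform $n$-dimensional $\Delta$-system, witnessed by an ordinal $\rho$ and sets $\langle \mathbf{r}_{\mathbf{m}} \mid \mathbf{m} \subseteq n \rangle$. Then: (1) for all $\mathbf{m} \subseteq n$ and all $a, b \in [H]^n$, if $a[\mathbf{m}] = b[\mathbf{m}]$, then $u_a[\mathbf{r}_{\mathbf{m}}] = u_b[\mathbf{r}_{\mathbf{m}}]$; (2) $\langle u_b \mid b \in [H]^n \rangle$ is an $n$-dimensional $\Delta$-system.
   Context: Natural numbers are von Neumann ordinals, so $n = \{0, \dots, n-1\}$. $[H]^k$ denotes the set of $k$-element subsets of $H$. For a set $u$ of ordinals, $\mathrm{otp}(u)$ is its order type; for $i < \mathrm{otp}(u)$, $u(i)$ is the unique $\alpha \in u$ with $\mathrm{otp}(u \cap \alpha) = i$; for $\mathbf{i} \subseteq \mathrm{otp}(u)$, $u[\mathbf{i}] := \{u(i) \mid i \in \mathbf{i}\}$. Sets of ordinals $a, b$ are aligned if $\mathrm{otp}(a) = \mathrm{otp}(b)$ and for every $\gamma \in a \cap b$, $\mathrm{otp}(a \cap \gamma) = \mathrm{otp}(b \cap \gamma)$. Let $\mathbf{r}(a,b) := \{ i < \mathrm{otp}(a) \mid a(i) \in b\}$. A family $\langle u_b \mid b \in [H]^n \rangle$ of sets of ordinals is a uniform $n$-dimensional $\Delta$-system, witnessed by an ordinal $\rho$ and sets $\mathbf{r}_{\mathbf{m}} \subseteq \rho$ ($\mathbf{m}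 \subseteq n$), if: (i) $\mathrm{otp}(u_b) = \rho$ for all $b \in [H]^n$; (ii) for all $a, b \in [H]^n$ and $\mathbf{m} \subseteq n$, if $a$ and $b$ are aligned with $\mathbf{r}(a,b) = \mathbf{m}$, then $u_a$ and $u_b$ are aligned with $\mathbf{r}(u_a, u_b) = \mathbf{r}_{\mathbf{m}}$; (iii) $\mathbf{r}_{\mathbf{m}_0 \cap \mathbf{m}_1} = \mathbf{r}_{\mathbf{m}_0} \cap \mathbf{r}_{\mathbf{m}_1}$ for all $\mathbf{m}_0, \mathbf{m}_1 \subseteq n$. A family of sets $\langle u_b \mid b \in [H]^n \rangle$ is an $n$-dimensional $\Delta$-system if there is a family of roots $\langle R^{\mathbf{m}}_a \mid \mathbf{m} \subseteq n,\ a \in [H]^{|\mathbf{m}|} \rangle$ such that for all $b, b' \in [H]^n$, if $b$ and $b'$ are aligned and $\mathbf{r}(b,b') = \mathbf{m}$, then $u_b \cap u_{b'} = R^{\mathbf{m}}_{b \cap b'}$. *)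

From mathcomp Require Import all_boot all_order.
From mathcomp Require Import boolp classical_sets.
Import Order.TTheory.



Unset Printing Implicit Defensive.

Local Open Scope classical_set_scope.
Local Open Scope order_scope.

(* Ordinals are modelled by the elements of an arbitrary well-ordered type
   [O] (an orderType whose strict order is well-founded); natural numbers
   n = {0,...,n-1} are modelled by [nat] with its usual order.  Order types
   are represented by an index type [I] (either [nat] or [O]). *)

Section Defs.
Context {d : Order.disp_t} {O : orderType d}.

Definition below {dI : Order.disp_t} {I : orderType dI} (r : I) : set I :=
  [set i | i < r].

Definition is_otp {dI : Order.disp_t} {I : orderType dI} (u : set O) (r : I)
  : Prop :=
  exists f : I -> O,
    (forall i j, i < j -> j < r -> f i < f j) /\
    (forall x, u x <-> exists2 i, i < r & f i = x).

Definition elem_at {dI : Order.disp_t} {I : orderType dI} (u : set O) (i : I)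
  (x : O) : Prop :=
  u x /\ is_otp (u `&` below x) i.

Definition img {dI : Order.disp_t} (I : orderType dI) (u : set O) (ii : set I)
  : set O :=
  [set x | exists2 i, ii i & elem_at u i x].

Definition rr {dI : Order.disp_t} (I : orderType dI) (a b : set O) : set I :=
  [set i | exists2 x, elem_at a i x & b x].

Definition aligned {dI : Order.disp_t} (I : orderType dI) (a b : set O) : Prop :=
  (exists r : I, is_otp a r /\ is_otp b r) /\
  (forall g, a g -> b g ->
     exists i : I, is_otp (a `&` below g) i /\ is_otp (b `&` below g) i).

Definition nsubsets (H : set O) (n : nat) : set (set O) :=
  [set b | b `<=` H /\ is_otp b n].

Definition uniform_delta_system (H : set O) (n : nat) (u : set O -> set O)
  (rho : O) (r : set nat -> set O) : Prop :=
  [/\ (forall m, m `<=` below n -> r m `<=` below rho),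
      (forall b, nsubsets H n b -> is_otp (u b) rho),
      (forall a b (m : set nat), m `<=` below n ->
         nsubsets H n a -> nsubsets H n b ->
         aligned nat a b -> rr nat a b = m ->
         aligned O (u a) (u b) /\ rr O (u a) (u b) = r m)
    & (forall m0 m1, m0 `<=` below n -> m1 `<=` below n ->
         r (m0 `&` m1) = r m0 `&` r m1)].

(* n-dimensional Delta-system: roots R^m_a, a ∈ [H]^{|m|} *)
Definition delta_system (H : set O) (n : nat) (u : set O -> set O) : Prop :=
  exists R : set nat -> set O -> set O,
    forall b b' (m : set nat), m `<=` below n ->
      nsubsets H n b -> nsubsets H n b' ->
      aligned nat b b' -> rr nat b b' = m ->
      u b `&` u b' = R m (b `&` b').

End Defs.

From mathcomp Require Import all_boot all_order.
From mathcomp Require Import boolp classical_sets.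
Import Order.TTheory.
Local Open Scope classical_set_scope.
Local Open Scope order_scope.

(* (1) If a[m] = b[m], the increasing enumerations of a and b agree on m, and
   so does their pointwise minimum z, whose range again lies in [H]^n.
   Replacing the entries of a by those of z one position at a time gives a
   chain from a to z in [H]^n; consecutive members differ in one position,
   so they are aligned and r(.,.) contains m.  Uniformity then makes the
   corresponding u's aligned with r(u_s, u_t) = r_M for some M containing m,
   and r_m is contained in r_M because m ↦ r_m preserves intersections.
   Hence consecutive u's agree on the positions r_m, and
   u_a[r_m] = u_z[r_m] = u_b[r_m].
   (2) For aligned b, b' with r(b, b') = m we have b ∩ b' = b[m] and
   u_b ∩ u_b' = u_b[r_m], which by (1) depends only on b[m]; so
   R^m_c := u_a[r_m] for any a with a[m] = c is a family of roots. *)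

Section Enumerations.
Context {d : Order.disp_t} {O : orderType d}.
Context {dI : Order.disp_t} {I : orderType dI}.

Definition increasing (r : I) (f : I -> O) : Prop :=
  forall i j, i < j -> j < r -> f i < f j.

Definition enumerates (u : set O) (r : I) (f : I -> O) : Prop :=
  increasing r f /\ (forall x, u x <-> exists2 i, i < r & f i = x).

Lemma increasing_lt {r f i j} : increasing r f -> i < r -> j < r ->
  (f i < f j) = (i < j).
Proof.
move=> incf ir jr; case: (ltgtP i j) => [ij|ji|->]; last by rewrite ltxx.
- exact: incf.
- by apply/negbTE; rewrite -leNgt ltW // incf.
Qed.

Lemma increasing_le {r f i j} : increasing r f -> i < r -> j < r ->
  (f i <= f j) = (i <= j).
Proof. by move=> incf ir jr; rewrite !leNgt (increasing_lt incf jr ir). Qed.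

Lemma increasing_inj {r f i j} : increasing r f -> i < r -> j < r ->
  f i = f j -> i = j.
Proof.
move=> incf ir jr fij; apply/le_anti.
by rewrite -(increasing_le incf ir jr) -(increasing_le incf jr ir) fij lexx.
Qed.

Lemma enumerates_image {u r f} : enumerates u r f -> u = f @` below r.
Proof. by move=> ef; apply/seteqP; split=> x /ef.2. Qed.

Lemma enumerates_below {u r f k} : enumerates u r f -> k < r ->
  enumerates (u `&` below (f k)) k f.
Proof.
move=> ef kr; split=> [i j ij jk|x]; first exact: ef.1 ij (lt_trans jk kr).
split=> [[/ef.2 [i ir <-]]|[i ik <-]].
  by rewrite /below /= (increasing_lt ef.1 ir kr) => ik; exists i.
have ir := lt_trans ik kr.
by split; [apply/ef.2; exists i | rewrite /below /= (increasing_lt ef.1 ir kr)].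
Qed.

Section WellFounded.
Hypothesis wfI : well_founded (fun i j : I => i < j).

Lemma enumerates_unique {u r r' f g} : enumerates u r f -> enumerates u r' g ->
  forall i, i < r -> i < r' /\ f i = g i.
Proof.
move=> ef eg; elim/(well_founded_induction wfI) => i IH ir.
have [k kr' gk] : exists2 k, k < r' & g k = f i by apply/eg.2/ef.2; exists i.
have ik : i <= k.
  rewrite leNgt; apply/negP => ki; have [_ fgk] := IH k ki (lt_trans ki ir).
  by have := increasing_lt ef.1 (lt_trans ki ir) ir; rewrite fgk gk ltxx ki.
have ir' := le_lt_trans ik kr'.
have [l lr fl] : exists2 l, l < r & f l = g i by apply/ef.2/eg.2; exists i.
have il : i <= l.
  rewrite leNgt; apply/negP => li; have [_ fgl] := IH l li (lt_trans li ir).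
  by have := increasing_lt eg.1 (lt_trans li ir') ir'; rewrite -fgl fl ltxx li.
split=> //; apply/le_anti.
rewrite -{1}fl (increasing_le ef.1 ir lr) il -gk.
by rewrite (increasing_le eg.1 ir' kr') ik.
Qed.

Lemma otp_unique {u r r' f g} : enumerates u r f -> enumerates u r' g -> r = r'.
Proof.
suff otp_lt : forall r r' f g,
    enumerates u r f -> enumerates u r' g -> ~ r < r'.
  move=> ef eg; case: (ltgtP r r') => // [rr'|r'r].
    by case: (otp_lt _ _ _ _ ef eg rr').
  by case: (otp_lt _ _ _ _ eg ef r'r).
move=> {}r {}r' {}f {}g ef eg rr'.
have [l lr fl] : exists2 l, l < r & f l = g r by apply/ef.2/eg.2; exists r.
have [_ fgl] := enumerates_unique ef eg _ lr.
have lr_eq := increasing_inj eg.1 (lt_trans lr rr') rr' (etrans (esym fgl) fl).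
by rewrite lr_eq ltxx in lr.
Qed.

Lemma elem_atE {u r f} i x : enumerates u r f ->
  elem_at u i x <-> i < r /\ f i = x.
Proof.
move=> ef; split=> [[/ef.2 [k kr <-] [g eg]]|[ir <-]].
  by rewrite -(otp_unique (enumerates_below ef kr) eg).
by split; [apply/ef.2; exists i | exists f; exact: enumerates_below ef ir].
Qed.

Lemma imgE {u r f} m : enumerates u r f -> img I u m = f @` (m `&` below r).
Proof.
move=> ef; apply/seteqP; split=> x.
  by move=> [i mi /(elem_atE _ _ ef) [ir <-]]; exists i.
by move=> [i [mi ir] <-]; exists i => //; apply/(elem_atE _ _ ef).
Qed.

Lemma rrE {a r f} b : enumerates a r f -> rr I a b = below r `&` f @^-1` b.
Proof.
move=> ef; apply/seteqP; split=> i.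
  by move=> [x /(elem_atE _ _ ef) [ir <-]].
by move=> [ir bfi]; exists (f i) => //; apply/(elem_atE _ _ ef).
Qed.

Lemma img_rr {a r f} b : enumerates a r f -> img I a (rr I a b) = a `&` b.
Proof.
move=> ef; rewrite (imgE _ ef) (rrE _ ef) (enumerates_image ef).
apply/seteqP; split=> x.
  by move=> [i [[ir bfi] _] <-]; split=> //; exists i.
by move=> [[i ir <-] bfi]; exists i.
Qed.

Lemma alignedP {a b r f g} : enumerates a r f -> enumerates b r g ->
  aligned I a b <-> (forall i j, i < r -> j < r -> f i = g j -> i = j).
Proof.
move=> ef eg; split=> [[_ al] i j ir jr fg|inj].
  have afi : a (f i) by apply/ef.2; exists i.
  have bfi : b (f i) by rewrite fg; apply/eg.2; exists j.
  have [k [[F eF] [G eG]]] := al _ afi bfi.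
  rewrite (otp_unique (enumerates_below ef ir) eF).
  by rewrite fg in eG; rewrite -(otp_unique (enumerates_below eg jr) eG).
split=> [|x /ef.2 [i ir <-] /eg.2 [j jr gj]].
  by exists r; split; [exists f | exists g].
have ij := inj _ _ ir jr (esym gj); subst j.
exists i; split; first by exists f; exact: enumerates_below ef ir.
by rewrite -gj; exists g; exact: enumerates_below eg jr.
Qed.

Lemma img_eq_of_enum_eq {a b r f g} m : enumerates a r f -> enumerates b r g ->
  (forall i, m i -> i < r -> f i = g i) -> img I a m = img I b m.
Proof.
move=> ef eg fg; rewrite (imgE _ ef) (imgE _ eg).
by apply: eq_imagel => i [mi ir]; exact: fg.
Qed.

Lemma enum_eq_of_img_eq {a b r f g m} : enumerates a r f -> enumerates b r g ->
  img I a m = img I b m -> forall i, m i -> i < r -> f i = g i.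
Proof.
move=> ef eg; rewrite (imgE _ ef) (imgE _ eg) => fg.
elim/(well_founded_induction wfI) => i IH mi ir.
have [j [mj jr] gj] : (g @` (m `&` below r)) (f i) by rewrite -fg; exists i.
have [k [mk kr] fk] : (f @` (m `&` below r)) (g i) by rewrite fg; exists i.
have ij : i <= j.
  rewrite leNgt; apply/negP => ji.
  by have := increasing_lt ef.1 jr ir; rewrite IH // gj ltxx ji.
have ik : i <= k.
  rewrite leNgt; apply/negP => ki.
  by have := increasing_lt eg.1 kr ir; rewrite -IH // fk ltxx ki.
apply/le_anti; rewrite -{1}fk (increasing_le ef.1 ir kr) ik -gj.
by rewrite (increasing_le eg.1 ir jr) ij.
Qed.
End WellFounded.
End Enumerations.

Lemma wf_ltn : well_founded (fun i j : nat => i < j).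
Proof. by move=> i; elim/ltn_ind: i => i IH; constructor => j /IH. Qed.

Section Splice.
Context {d : Order.disp_t} {O : orderType d}.
Implicit Types (n k : nat) (x y z w : nat -> O).

Lemma increasing_eq_except_inj n k x y : increasing n x -> increasing n y ->
  (forall i, i < n -> i <> k -> x i = y i) ->
  forall i j, i < n -> j < n -> x i = y j -> i = j.
Proof.
suff lt_false : forall x y, increasing n x -> increasing n y ->
    (forall i, i < n -> i <> k -> x i = y i) ->
    forall i j, i < j -> j < n -> x i = y j -> False.
  move=> ix iy xy i j ilt jlt xyij; case: (ltgtP i j) => // [ij|ji].
    by case: (lt_false x y ix iy xy i j ij jlt xyij).
  have yx i' : i' < n -> i' <> k -> y i' = x i' by move=> *; rewrite xy.
  by case: (lt_false y x iy ix yx j i ji ilt (esym xyij)).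
move=> {}x {}y ix iy xy i j ij jn xyij.
have ilt := lt_trans ij jn.
case: (eqVneq j k) => [jk|/eqP jk].
  have ik : i <> k by move=> ik; rewrite ik -jk ltxx in ij.
  by have := iy i j ij jn; rewrite -xyij -(xy i ilt ik) ltxx.
by have := ix i j ij jn; rewrite xyij (xy j jn jk) ltxx.
Qed.

Definition splice z w k i : O := if (i < k)%N then z i else w i.

Lemma increasing_splice {n z w k} : increasing n z -> increasing n w ->
  (forall i, i < n -> z i <= w i) -> increasing n (splice z w k).
Proof.
move=> iz iw zw i j ij jn; rewrite /splice.
case: (ltnP j k) => jk; first by rewrite (ltn_trans ij jk); exact: iz.
case: ifP => _; last exact: iw.
exact: le_lt_trans (zw i (lt_trans ij jn)) (iw i j ij jn).
Qed.

Lemma splice_succ_inj {n z w k} : increasing n z -> increasing n w ->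
  (forall i, i < n -> z i <= w i) ->
  forall i j, i < n -> j < n -> splice z w k i = splice z w k.+1 j -> i = j.
Proof.
move=> iz iw zw; apply: (increasing_eq_except_inj n k);
  try exact: increasing_splice.
by move=> i _ ik; rewrite /splice ltnS [(i <= k)%N]leq_eqVlt; case: eqP.
Qed.
End Splice.

Section UniformDeltaSystem.
Context {d : Order.disp_t} {O : orderType d}.
Hypothesis wfO : well_founded (fun x y : O => x < y).
Context {n : nat} {H : set O} {u : set O -> set O}.
Context {rho : O} {r : set nat -> set O}.
Hypothesis hu : uniform_delta_system H n u rho r.

Lemma r_monotone {m M} : M `<=` below n -> m `<=` M -> r m `<=` r M.
Proof.
case: hu => _ _ _ hcap Mn mM; rewrite -(setIidl mM) hcap //.
  by move=> i [].
exact: subset_trans mM Mn.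
Qed.

Lemma img_r_eq_of_aligned {m s t} : m `<=` below n ->
  nsubsets H n s -> nsubsets H n t -> aligned nat s t -> m `<=` rr nat s t ->
  img O (u s) (r m) = img O (u t) (r m).
Proof.
case: hu => _ hotp hal _ mn hs ht st mst.
have [es ees] := hs.2.
have Mn : rr nat s t `<=` below n by rewrite (rrE wf_ltn _ ees) => i [].
have [ust rrst] := hal s t _ Mn hs ht st erefl.
have [[F eF] [G eG]] := (hotp s hs, hotp t ht).
apply: (img_eq_of_enum_eq wfO _ eF eG) => i /(r_monotone Mn mst).
rewrite -rrst (rrE wfO _ eF) => -[irho /eG.2 [j jrho Gj]] _.
by rewrite -Gj ((alignedP wfO eF eG).1 ust i j irho jrho (esym Gj)).
Qed.

Lemma img_r_eq_of_le {m W Z w z} : m `<=` below n ->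
  nsubsets H n W -> nsubsets H n Z -> enumerates W n w -> enumerates Z n z ->
  (forall i, i < n -> z i <= w i) -> (forall i, m i -> z i = w i) ->
  img O (u W) (r m) = img O (u Z) (r m).
Proof.
move=> mn hW hZ ew ez zw mzw.
pose C k := splice z w k @` below n.
have eC k : enumerates (C k) n (splice z w k).
  by split; [exact: increasing_splice ez.1 ew.1 zw | move=> x].
have hC k : nsubsets H n (C k).
  split; last exact: ex_intro _ _ (eC k).
  move=> _ [i ilt <-]; rewrite /splice; case: ifP => _.
    by apply: hZ.1; apply/ez.2; exists i.
  by apply: hW.1; apply/ew.2; exists i.
have C0 : C 0 = W.
  rewrite (enumerates_image ew).
  by apply: eq_imagel => i _; rewrite /splice ltn0.
have Cn : C n = Z.
  rewrite (enumerates_image ez).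
  by apply: eq_imagel => i ilt; rewrite /splice ifT.
suff chain k : img O (u (C 0)) (r m) = img O (u (C k)) (r m) by rewrite -C0 -Cn.
elim: k => [//|k ->]; apply: img_r_eq_of_aligned => //.
  exact/(alignedP wf_ltn (eC k) (eC k.+1))/(splice_succ_inj ez.1 ew.1 zw).
rewrite (rrE wf_ltn _ (eC k)) => i mi; split; first exact: mn.
by exists i; [exact: mn | rewrite /splice mzw //; case: ifP; case: ifP].
Qed.

Lemma img_r_eq_of_img_eq {m a b} : m `<=` below n ->
  nsubsets H n a -> nsubsets H n b -> img nat a m = img nat b m ->
  img O (u a) (r m) = img O (u b) (r m).
Proof.
move=> mn ha hb ab.
have [[ea eea] [eb eeb]] := (ha.2, hb.2).
pose z i := Order.min (ea i) (eb i).
have ez : enumerates (z @` below n) n z.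
  by split=> // i j ij jn; rewrite lt_min !gt_min eea.1 ?eeb.1 ?orbT.
have hZ : nsubsets H n (z @` below n).
  split; last exact: ex_intro _ _ ez.
  move=> _ [i ilt <-]; rewrite /z minEle; case: ifP => _.
    by apply: ha.1; apply/eea.2; exists i.
  by apply: hb.1; apply/eeb.2; exists i.
have za i : i < n -> z i <= ea i by rewrite ge_min lexx.
have zb i : i < n -> z i <= eb i by rewrite ge_min lexx orbT.
have eab := enum_eq_of_img_eq wf_ltn eea eeb ab.
have mza i : m i -> z i = ea i.
  by move=> mi; rewrite /z eab ?minxx //; exact: mn.
have mzb i : m i -> z i = eb i.
  by move=> mi; rewrite /z eab ?minxx //; exact: mn.
rewrite (img_r_eq_of_le mn ha hZ eea ez za mza).
by rewrite (img_r_eq_of_le mn hb hZ eeb ez zb mzb).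
Qed.

Lemma delta_system_of_uniform : delta_system H n u.
Proof.
(* The union ranges over sets [a] that all yield the same [u_a[r_m]], by (1). *)
exists (fun m c => [set x | exists2 a, nsubsets H n a /\ img nat a m = c &
                                      img O (u a) (r m) x]).
move=> b b' m mn hb hb' bb' rrm.
case: hu => _ hotp hal _.
have [[eb eeb] [F eF]] := (hb.2, hotp b hb).
have [_ rrO] := hal b b' m mn hb hb' bb' rrm.
rewrite -(img_rr wfO _ eF) rrO -(img_rr wf_ltn _ eeb) rrm.
apply/seteqP; split=> x; first by exists b.
by move=> [a [ha abm]]; rewrite (img_r_eq_of_img_eq mn ha hb abm).
Qed.
End UniformDeltaSystem.

Theorem proposition2p6 (d : Order.disp_t) (O : orderType d)
  (wfO : well_founded (fun x y : O => (x < y)%O))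
  (n : nat) (hn : (1 <= n)%N) (H : set O) (u : set O -> set O)
  (rho : O) (r : set nat -> set O)
  (hu : uniform_delta_system H n u rho r) :
  (forall (m : set nat) (a b : set O), m `<=` below n ->
     nsubsets H n a -> nsubsets H n b ->
     img nat a m = img nat b m ->
     img O (u a) (r m) = img O (u b) (r m)) /\
  delta_system H n u.
Proof.
split; last exact: (delta_system_of_uniform wfO hu).
by move=> m a b; exact: (img_r_eq_of_img_eq wfO hu).
Qed.
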